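(* Let $X\neq\emptyset$ be a countable set and let $F=(F_x)_{x\in X}$ be a family of finite-dimensional complex vector spaces. Let $A\colon \Gamma(X;F)\to\Gamma(X;F)$ be a continuous linear operator. Then the following are equivalent: (i) $A$ is surjective; (ii) the dual operator $A'\colon \Gamma_c(X;F')\to\Gamma_c(X;F')$ is injective.
   Context: $\Gamma(X;F)=\prod_{x\in X}F_x$ is the space of all maps $f$ on $X$ with $f(x)\in F_x$ for all $x$, equipped with the product topology (each $F_x$ carries its unique Hausdorff vector space topology); equivalently the locally convex topology generated by the seminorms $p_K(f)=\sum_{x\in K}\|f(x)\|_x$, $K\subseteq X$ finite, where $\|\cdot\|_x$ is a fixed norm on $F_x$. $\Gamma_c(X;F)$ is the subspace of $f$ vanishing outside a finite set. $F'=(F_x')_{x\in X}$ is the family of dual spaces. $\Gamma_c(X;F')$ is identified with the continuous dual of $\Gamma(X;F)$ via the pairing $(\varphi,f)=\sum_{x\in X}\varphi(x)(f(x))$. A linear operator $A$ on $\Gamma(X;F)$ is continuous iff for every $x\in X$ there is a finite $K\subseteq X$ such that $Af(x)$ depends only on $f|_K$. For continuous $A$, the dual operator $A'\colon\Gamma_c(X;F')\to\Gamma_c(X;F')$ is defined by $(A'\varphi,f)=(\varphi,Af)$ for all $f\in\Gamma(X;F)$, $\varphi\in\Gamma_c(X;F')$. *)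

From HB Require Import structures.
From mathcomp Require Import all_boot all_order all_algebra.
From mathcomp Require Import boolp classical_sets fsbigop reals.
From mathcomp Require Import complex.
Set Implicit Arguments. Unset Strict Implicit. Unset Printing Implicit Defensive.
Import Order.TTheory GRing.Theory Num.Theory.
Local Open Scope ring_scope.

Section Sections.
Variables (K : fieldType) (X : choiceType) (F : X -> vectType K).

Definition Gam := forall x : X, F x.

Definition DualSec := forall x : X, 'Hom(F x, K^o).

(* Membership in Gamma_c(X;F'): vanishing outside a finite set. *)
Definition fin_supp (phi : DualSec) : Prop :=
  exists s : seq X, forall x, x \notin s -> phi x = 0.

(* The pairing (phi, f) = sum_x phi(x)(f(x)) (a finite sum for phi in Gamma_c). *)
Definition pairing (phi : DualSec) (f : Gam) : K :=
  \sum_(x \in [set: X]) (phi x (f x) : K).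

Definition lin_op (A : Gam -> Gam) : Prop :=
  forall (a : K) (f g : Gam),
    A (fun x => a *: f x + g x) = (fun x => a *: A f x + A g x).

(* Continuity of A w.r.t. the product topology, via the criterion:
   for every x there is a finite K such that Af(x) depends only on f|_K. *)
Definition cont_op (A : Gam -> Gam) : Prop :=
  forall x : X, exists Ks : seq X, forall f g : Gam,
    (forall y, y \in Ks -> f y = g y) -> A f x = A g x.

Definition dual_op (A : Gam -> Gam) (A' : DualSec -> DualSec) : Prop :=
  (forall phi, fin_supp phi -> fin_supp (A' phi)) /\
  (forall phi, fin_supp phi -> forall f : Gam, pairing (A' phi) f = pairing phi (A f)).

Definition surj_op (A : Gam -> Gam) : Prop := forall g : Gam, exists f, A f = g.

Definition inj_on_Gc (A' : DualSec -> DualSec) : Prop :=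
  forall phi psi, fin_supp phi -> fin_supp psi -> A' phi = A' psi -> phi = psi.

End Sections.

From HB Require Import structures.
From mathcomp Require Import all_boot all_order all_algebra.
From mathcomp Require Import boolp classical_sets fsbigop reals.
From mathcomp Require Import complex.
Set Implicit Arguments. Unset Strict Implicit. Unset Printing Implicit Defensive.
Import GRing.Theory.
Local Open Scope ring_scope.

(* Via the pairing, Gamma(X;F) is the algebraic dual of Gamma_c(X;F') (each F_x
   is finite-dimensional) and A is the transpose of A'.  If A is onto, A' is
   injective because Gamma(X;F) separates Gamma_c(X;F').  Conversely, to solve
   A f = g, the functional A' psi |-> (psi, g) is well defined on the range of A'
   when A' is injective; it extends to all of Gamma_c(X;F'), which is spanned by
   a countable family, step by step along that family (no Zorn's lemma); and the
   extension is (., f) for some section f, which then satisfies A f = g. *)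

Definition linear_on (K : fieldType) (V : lmodType K) (S : V -> Prop) (mu : V -> K) :=
  forall a v w, S v -> S w -> mu (a *: v + w) = a * mu v + mu w.

Section LinearOn.
Variables (K : fieldType) (V : lmodType K) (S : V -> Prop) (mu : V -> K).
Hypothesis S0 : S 0.
Hypothesis S_lin : forall a v w, S v -> S w -> S (a *: v + w).
Hypothesis mu_lin : linear_on S mu.

Lemma linear_on0 : mu 0 = 0.
Proof.
have := mu_lin 1 S0 S0; rewrite scale1r addr0 mul1r => mu00.
by apply: (addrI (mu 0)); rewrite addr0 -mu00.
Qed.

Lemma linear_onZ a v : S v -> mu (a *: v) = a * mu v.
Proof. by move=> Sv; rewrite -[a *: v]addr0 mu_lin // linear_on0 addr0. Qed.

Lemma linear_on_sum I (r : seq I) (G : I -> V) : (forall i, S (G i)) ->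
  mu (\sum_(i <- r) G i) = \sum_(i <- r) mu (G i).
Proof.
move=> SG; elim: r => [|i r IH]; first by rewrite !big_nil linear_on0.
have Ssum : S (\sum_(j <- r) G j).
  by apply: (big_ind S) => // v w Sv Sw; rewrite -[v]scale1r; apply: S_lin.
by rewrite !big_cons -IH -{1}[G i]scale1r mu_lin // mul1r.
Qed.

End LinearOn.

Section CountableExtension.
Variables (K : fieldType) (V : lmodType K) (W : V -> Prop) (nu : V -> K) (u : nat -> V).
Hypothesis W0 : W 0.
Hypothesis W_lin : forall a v w, W v -> W w -> W (a *: v + w).
Hypothesis nu_lin : linear_on W nu.

Definition span_upto n v :=
  exists2 w, W w & exists c : nat -> K, v = w + \sum_(k < n) c k *: u k.

Definition spanned v := exists n, span_upto n v.

Lemma span_upto_W n w : W w -> span_upto n w.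
Proof.
by exists w => //; exists (fun=> 0); rewrite big1 ?addr0 // => k _; rewrite scale0r.
Qed.

Lemma span_upto_lin n a v w : span_upto n v -> span_upto n w -> span_upto n (a *: v + w).
Proof.
move=> [v0 Wv0 [c ->]] [w0 Ww0 [d ->]]; exists (a *: v0 + w0); first exact: W_lin.
exists (fun k => a * c k + d k); rewrite scalerDr scaler_sumr addrACA -big_split /=.
by congr (_ + _); apply: eq_bigr => k _; rewrite scalerA scalerDl.
Qed.

Lemma span_uptoZ n a v : span_upto n v -> span_upto n (a *: v).
Proof. by move=> hv; have := span_upto_lin a hv (span_upto_W n W0); rewrite addr0. Qed.

Lemma span_uptoS n v :
  span_upto n.+1 v <-> exists y a, span_upto n y /\ v = y + a *: u n.
Proof.
split=> [[w Ww [c ->]]|[y [a [[w Ww [c ->]] ->]]]].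
  exists (w + \sum_(k < n) c k *: u k), (c n).
  by rewrite big_ord_recr /= addrA; split=> //; exists w => //; exists c.
exists w => //; exists (fun k => if k == n then a else c k).
rewrite big_ord_recr /= eqxx -addrA; congr (_ + (_ + _)).
by apply: eq_bigr => k _; rewrite ltn_eqF.
Qed.

Lemma span_upto_mono n m v : (n <= m)%N -> span_upto n v -> span_upto m v.
Proof.
move=> /subnK <-; elim: (m - n)%N => // k IH /IH hv.
by apply/span_uptoS; exists v, 0; rewrite scale0r addr0.
Qed.

Lemma span_upto_u k : span_upto k.+1 (u k).
Proof.
apply/span_uptoS; exists 0, 1; rewrite scale1r add0r; split=> //.
exact: span_upto_W.
Qed.

Lemma spanned_lin a v w : spanned v -> spanned w -> spanned (a *: v + w).
Proof.
move=> [n hv] [m hw]; exists (maxn n m); apply: span_upto_lin.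
  by apply: span_upto_mono hv; rewrite leq_maxl.
by apply: span_upto_mono hw; rewrite leq_maxr.
Qed.

Lemma spanned_u k : spanned (u k).
Proof. by exists k.+1; apply: span_upto_u. Qed.

Lemma spanned0 : spanned 0.
Proof. by exists 0%N; apply: span_upto_W. Qed.

(* Step m.+1 extends ext m from span_upto m to span_upto m.+1 by giving u m
   the value 0, unless u m already lies in span_upto m. *)
Fixpoint ext n v : K :=
  if n is m.+1 then
    if pselect (span_upto m (u m)) is left _ then ext m v else
    if pselect (exists p : V * K, span_upto m p.1 /\ v = p.1 + p.2 *: u m)
      is left h then ext m (sval (cid h)).1 else 0
  else nu v.

Lemma span_upto_new_uniq n y z a b : ~ span_upto n (u n) ->
  span_upto n y -> span_upto n z -> y + a *: u n = z + b *: u n -> y = z.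
Proof.
move=> new hy hz e; have [a_eq_b|nab] := eqVneq a b.
  by move: e; rewrite a_eq_b => /addIr.
have eab : (a - b) *: u n = (-1) *: y + z.
  rewrite scalerBl; have -> : a *: u n = z + b *: u n - y by rewrite -e addrC addKr.
  by rewrite scaleN1r addrAC addrK addrC.
case: new; have -> : u n = (a - b)^-1 *: ((-1) *: y + z).
  by rewrite -eab scalerA mulVf ?scale1r // subr_eq0.
exact/span_uptoZ/span_upto_lin.
Qed.

Lemma ext_new n y a : ~ span_upto n (u n) -> span_upto n y ->
  ext n.+1 (y + a *: u n) = ext n y.
Proof.
move=> new hy /=; case: pselect => [old|_]; first by case: new.
case: pselect => [h|[]]; last by exists (y, a).
by case: cid => -[z b] /= [hz e]; rewrite (span_upto_new_uniq new hy hz e).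
Qed.

Lemma ext_step n y : span_upto n y -> ext n.+1 y = ext n y.
Proof.
move=> hy; case: (pselect (span_upto n (u n))) => [old|new].
  by rewrite /=; case: pselect.
by have := ext_new 0 new hy; rewrite scale0r addr0.
Qed.

Lemma ext_W n w : W w -> ext n w = nu w.
Proof. by move=> Ww; elim: n => // n IH; rewrite ext_step ?IH //; exact: span_upto_W. Qed.

Lemma ext_linear n : linear_on (span_upto n) (ext n).
Proof.
elim: n => [a v w [v0 Wv0 [c ->]] [w0 Ww0 [d ->]]|n IH a v w].
  by rewrite !big_ord0 !addr0; apply: nu_lin.
case: (pselect (span_upto n (u n))) => [old|new].
  have down z : span_upto n.+1 z -> span_upto n z.
    by move/span_uptoS => [y [b [hy ->]]]; rewrite addrC; apply: span_upto_lin.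
  move=> /down hv /down hw.
  by rewrite !ext_step ?IH //; apply: span_upto_lin.
move=> /span_uptoS [y [b [hy ->]]] /span_uptoS [z [c [hz ->]]].
have -> : a *: (y + b *: u n) + (z + c *: u n) = (a *: y + z) + (a * b + c) *: u n.
  by rewrite scalerDr scalerA scalerDl addrACA.
by rewrite !ext_new //; [apply: IH | apply: span_upto_lin].
Qed.

Lemma ext_stable n m v : (n <= m)%N -> span_upto n v -> ext m v = ext n v.
Proof.
move=> /subnK <- hv; elim: (m - n)%N => // k IH.
by rewrite addSn ext_step ?IH //; apply: span_upto_mono hv; rewrite leq_addl.
Qed.

Lemma countable_extension :
  exists2 mu : V -> K, (forall w, W w -> mu w = nu w) & linear_on spanned mu.
Proof.
pose mu v := if pselect (spanned v) is left h then ext (sval (cid h)) v else 0.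
have muE n v : span_upto n v -> mu v = ext n v.
  move=> hv; rewrite /mu; case: pselect => [h|[]]; last by exists n.
  case: cid => m hm /=.
  by rewrite -(ext_stable (leq_maxl m n) hm) (ext_stable (leq_maxr m n) hv).
exists mu => [w Ww|a v w [n hv] [m hw]].
  by rewrite (muE 0%N) ?ext_W //; apply: span_upto_W.
pose k := maxn n m.
have hv' : span_upto k v by apply: span_upto_mono hv; rewrite leq_maxl.
have hw' : span_upto k w by apply: span_upto_mono hw; rewrite leq_maxr.
by rewrite !(muE k) //; [apply: ext_linear | apply: span_upto_lin].
Qed.

End CountableExtension.

Section Single.
Variables (X : eqType) (T : X -> nmodType).

Definition single x (v : T x) : forall y, T y :=
  fun y => if x =P y is ReflectT e then ecast y (T y) e v else 0.

Lemma single_id x (v : T x) : single v x = v.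
Proof. by rewrite /single; case: eqP => // e; rewrite (eq_irrelevance e erefl). Qed.

Lemma single_neq x (v : T x) y : x != y -> single v y = 0.
Proof. by rewrite /single; case: eqP. Qed.

End Single.

Section DualSecLmodule.
Variables (K : fieldType) (X : choiceType) (F : X -> vectType K).

HB.instance Definition _ := gen_eqMixin (DualSec F).
HB.instance Definition _ := gen_choiceMixin (DualSec F).

Let add (phi psi : DualSec F) : DualSec F := fun x => phi x + psi x.
Let opp (phi : DualSec F) : DualSec F := fun x => - phi x.
Let scale (a : K) (phi : DualSec F) : DualSec F := fun x => a *: phi x.
Let funE := functional_extensionality_dep.

Let addA : associative add. Proof. by move=> ? ? ?; apply: funE => x; apply: addrA. Qed.
Let addC : commutative add. Proof. by move=> ? ?; apply: funE => x; apply: addrC. Qed.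
Let add0 : left_id (fun=> 0) add. Proof. by move=> ?; apply: funE => x; apply: add0r. Qed.
Let addN : left_inverse (fun=> 0) opp add. Proof. by move=> ?; apply: funE => x; apply: addNr. Qed.
HB.instance Definition _ := GRing.isZmodule.Build (DualSec F) addA addC add0 addN.

Let scaleA a b phi : scale a (scale b phi) = scale (a * b) phi.
Proof. by apply: funE => x; apply: scalerA. Qed.
Let scale1 : left_id 1 scale. Proof. by move=> ?; apply: funE => x; apply: scale1r. Qed.
Let scaleDr : right_distributive scale +%R.
Proof. by move=> ? ? ?; apply: funE => x; apply: scalerDr. Qed.
Let scaleDl phi : {morph scale^~ phi : a b / a + b}.
Proof. by move=> ? ?; apply: funE => x; apply: scalerDl. Qed.
HB.instance Definition _ :=
  GRing.Zmodule_isLmodule.Build K (DualSec F) scaleA scale1 scaleDr scaleDl.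

End DualSecLmodule.

Section DualSections.
Variables (K : fieldType) (X : choiceType) (F : X -> vectType K).
Let funE := functional_extensionality_dep.

Lemma add_dual_secE (phi psi : DualSec F) x : (phi + psi) x = phi x + psi x.
Proof. by []. Qed.

Lemma scale_dual_secE a (phi : DualSec F) x : (a *: phi) x = a *: phi x.
Proof. by []. Qed.

Lemma sum_dual_secE I (r : seq I) (P : pred I) (G : I -> DualSec F) x :
  (\sum_(i <- r | P i) G i) x = \sum_(i <- r | P i) G i x.
Proof. by elim/big_rec2: _ => // i phi chi _ <-. Qed.

Lemma single_dual_lin x a (l m : 'Hom(F x, K^o)) :
  (single (a *: l + m) : DualSec F) = a *: (single l : DualSec F) + single m.
Proof.
apply: funE => y; rewrite add_dual_secE scale_dual_secE.
have [<-|nxy] := eqVneq x y; first by rewrite !single_id.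
by rewrite !single_neq // scaler0 add0r.
Qed.

Lemma single_dual0 x : (single (0 : 'Hom(F x, K^o)) : DualSec F) = 0.
Proof.
apply: funE => y; have [<-|nxy] := eqVneq x y; first by rewrite single_id.
by rewrite single_neq.
Qed.

Lemma single_dualZ x a (l : 'Hom(F x, K^o)) :
  (single (a *: l) : DualSec F) = a *: (single l : DualSec F).
Proof. by have := single_dual_lin a l 0; rewrite !addr0 single_dual0 addr0. Qed.

Lemma single_dual_sum x I (r : seq I) (G : I -> 'Hom(F x, K^o)) :
  (single (\sum_(i <- r) G i) : DualSec F) = \sum_(i <- r) (single (G i) : DualSec F).
Proof.
elim: r => [|i r IH]; first by rewrite !big_nil single_dual0.
by rewrite !big_cons -IH -{1}[G i]scale1r single_dual_lin scale1r.
Qed.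

Lemma fin_supp_lin a (phi psi : DualSec F) :
  fin_supp phi -> fin_supp psi -> fin_supp (a *: phi + psi).
Proof.
move=> [s hs] [t ht]; exists (s ++ t) => x; rewrite mem_cat negb_or => /andP[xs xt].
by rewrite add_dual_secE scale_dual_secE hs // ht // scaler0 addr0.
Qed.

Lemma fin_supp0 : fin_supp (0 : DualSec F).
Proof. by exists [::]. Qed.

Lemma fin_suppZ a (phi : DualSec F) : fin_supp phi -> fin_supp (a *: phi).
Proof. by move=> h; have := fin_supp_lin a h fin_supp0; rewrite addr0. Qed.

Lemma fin_supp_single x (l : 'Hom(F x, K^o)) : fin_supp (single l : DualSec F).
Proof. by exists [:: x] => y; rewrite inE eq_sym; apply: single_neq. Qed.

Lemma fin_supp_decomp (phi : DualSec F) s : (forall x, x \notin s -> phi x = 0) ->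
  phi = \sum_(x <- undup s) (single (phi x) : DualSec F).
Proof.
move=> hs; apply: funE => y; rewrite sum_dual_secE.
have [ys|nys] := boolP (y \in undup s).
  rewrite (bigD1_seq y) ?undup_uniq //= single_id.
  by rewrite big1 ?addr0 // => x nxy; rewrite single_neq.
rewrite big1_seq; last first.
  by move=> x /andP[_ xs]; rewrite single_neq //; apply: contraNneq nys => <-.
by apply: hs; rewrite -mem_undup.
Qed.

Lemma pairingE (phi : DualSec F) (f : Gam F) s :
  (forall x, x \notin s -> phi x (f x) = 0) ->
  pairing phi f = \sum_(x <- undup s) phi x (f x).
Proof.
move=> hs; rewrite (fsbig_seq _ _ (undup_uniq s)) /pairing.
apply/esym/fsbig_widen => // y [_ /=]; rewrite mem_undup => ys.
by rewrite /preimage /= hs //; apply/negP.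
Qed.

Lemma pairing_single (phi : DualSec F) x (v : F x) : pairing phi (single v) = phi x v.
Proof.
rewrite (@pairingE _ _ [:: x]) => [|y]; first by rewrite /= big_seq1 single_id.
by rewrite inE eq_sym => /single_neq ->; rewrite linear0.
Qed.

Lemma pairing_single_dual x (l : 'Hom(F x, K^o)) (f : Gam F) :
  pairing (single l) f = l (f x).
Proof.
rewrite (@pairingE _ _ [:: x]) => [|y]; first by rewrite /= big_seq1 single_id.
by rewrite inE eq_sym => /single_neq ->; rewrite zero_lfunE.
Qed.

Lemma pairing_linear (f : Gam F) :
  linear_on (@fin_supp _ _ F) (fun phi => pairing phi f).
Proof.
move=> a phi psi [s hs] [t ht].
have st x : x \notin s ++ t -> phi x = 0 /\ psi x = 0.
  by rewrite mem_cat negb_or => /andP[/hs -> /ht ->].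
have supp (chi : DualSec F) : (forall x, x \notin s ++ t -> chi x = 0) ->
    pairing chi f = \sum_(x <- undup (s ++ t)) chi x (f x).
  by move=> chi0; apply: pairingE => x /chi0 ->; rewrite zero_lfunE.
rewrite !supp => [|x /st[]|x /st[]|x /st[phi0 psi0]] //.
  rewrite mulr_sumr -big_split; apply: eq_bigr => x _.
  by rewrite add_dual_secE scale_dual_secE add_lfunE scale_lfunE.
by rewrite add_dual_secE scale_dual_secE phi0 psi0 scaler0 addr0.
Qed.

Lemma pairing0 (f : Gam F) : pairing 0 f = 0.
Proof. exact: (linear_on0 fin_supp0 (pairing_linear f)). Qed.

Lemma eq_pairing_dual (phi psi : DualSec F) :
  (forall f, pairing phi f = pairing psi f) -> phi = psi.
Proof.
move=> h; apply: funE => x; apply/lfunP => v.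
by have := h (single v); rewrite !pairing_single.
Qed.

Definition dual_coord x i : 'Hom(F x, K^o) :=
  linfun (coord (vbasis {:F x}) i : F x -> K^o).

Lemma hom_dual_coord x (l : 'Hom(F x, K^o)) :
  l = \sum_(i < \dim {:F x}) l (vbasis {:F x})`_i *: dual_coord i.
Proof.
apply/lfunP => v; rewrite sum_lfunE {1}(coord_vbasis (memvf v)) linear_sum.
by apply: eq_bigr => i _; rewrite linearZ scale_lfunE lfunE /=; apply: mulrC.
Qed.

Lemma eq_pairing_sec (f g : Gam F) :
  (forall phi, fin_supp phi -> pairing phi f = pairing phi g) -> f = g.
Proof.
move=> h; apply: funE => x.
rewrite (coord_vbasis (memvf (f x))) (coord_vbasis (memvf (g x))).
apply: eq_bigr => i _; congr (_ *: _).
by have := h _ (fin_supp_single (dual_coord i)); rewrite !pairing_single_dual !lfunE.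
Qed.

Lemma linear_functional_pairing (mu : DualSec F -> K) :
  linear_on (@fin_supp _ _ F) mu ->
  exists f : Gam F, forall phi, fin_supp phi -> mu phi = pairing phi f.
Proof.
move=> mu_lin; have muZ := linear_onZ fin_supp0 mu_lin.
have mu_sum := linear_on_sum fin_supp0 fin_supp_lin mu_lin.
pose f : Gam F := fun x =>
  \sum_(i < \dim {:F x}) mu (single (dual_coord i)) *: (vbasis {:F x})`_i.
have fE x (l : 'Hom(F x, K^o)) : l (f x) = mu (single l).
  rewrite {2}(hom_dual_coord l) single_dual_sum mu_sum => [|i]; last first.
    by rewrite single_dualZ; apply/fin_suppZ/fin_supp_single.
  rewrite linear_sum; apply: eq_bigr => i _.
  by rewrite linearZ single_dualZ muZ; [apply: mulrC | apply: fin_supp_single].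
exists f => phi [s hs].
rewrite {1}(fin_supp_decomp hs) mu_sum => [|x]; last exact: fin_supp_single.
rewrite (@pairingE _ _ s) => [|x /hs ->]; last by rewrite zero_lfunE.
by apply: eq_bigr => x _; rewrite fE.
Qed.

End DualSections.

Section CountableSpanning.
Variables (K : fieldType) (X : countType) (F : X -> vectType K).

Definition dual_basis (k : nat) : DualSec F :=
  if @unpickle {x : X & 'I_(\dim {:F x})} k is Some (existT x i)
  then single (dual_coord i) else 0.

Lemma fin_supp_spanned (W : DualSec F -> Prop) (phi : DualSec F) :
  W 0 -> (forall a v w, W v -> W w -> W (a *: v + w)) ->
  fin_supp phi -> spanned W dual_basis phi.
Proof.
move=> W0 W_lin [s hs].
have spanned_sum I (r : seq I) (G : I -> DualSec F) :
    (forall i, spanned W dual_basis (G i)) -> spanned W dual_basis (\sum_(i <- r) G i).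
  move=> hG; apply: big_ind => //; first exact: spanned0.
  by move=> v w hv hw; rewrite -[v]scale1r; apply: spanned_lin.
rewrite (fin_supp_decomp hs); apply: (spanned_sum) => x.
rewrite (hom_dual_coord (phi x)) single_dual_sum; apply: spanned_sum => i.
rewrite single_dualZ -[_ *: _]addr0; apply: spanned_lin => //; last exact: spanned0.
have -> : (single (dual_coord i) : DualSec F) =
    dual_basis (pickle (existT (fun y => 'I_(\dim {:F y})) x i)).
  by rewrite /dual_basis pickleK.
exact: spanned_u.
Qed.

End CountableSpanning.

Section DualOperator.
Variables (K : fieldType) (X : countType) (F : X -> vectType K).
Variables (A : Gam F -> Gam F) (A' : DualSec F -> DualSec F).
Hypothesis A'_dual : dual_op A A'.

Let A'_fin_supp := A'_dual.1.
Let A'_pairing := A'_dual.2.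

Lemma dual_op_lin a phi psi : fin_supp phi -> fin_supp psi ->
  A' (a *: phi + psi) = a *: A' phi + A' psi.
Proof.
move=> phi_fs psi_fs; apply: eq_pairing_dual => f.
rewrite A'_pairing; last exact: fin_supp_lin.
by rewrite !pairing_linear ?A'_pairing //; apply: A'_fin_supp.
Qed.

Lemma surj_dual_op_inj : surj_op A -> inj_on_Gc A'.
Proof.
move=> A_surj phi psi phi_fs psi_fs eq_A'; apply: eq_pairing_dual => f.
by have [h <-] := A_surj f; rewrite -!A'_pairing // eq_A'.
Qed.

Definition dual_range (phi : DualSec F) := exists2 psi, fin_supp psi & phi = A' psi.

Lemma dual_range0 : dual_range 0.
Proof.
exists 0; first exact: fin_supp0.
by apply: eq_pairing_dual => f; rewrite A'_pairing ?pairing0 //; apply: fin_supp0.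
Qed.

Lemma dual_range_lin a phi psi :
  dual_range phi -> dual_range psi -> dual_range (a *: phi + psi).
Proof.
move=> [phi' phi'_fs ->] [psi' psi'_fs ->]; exists (a *: phi' + psi').
  exact: fin_supp_lin.
by rewrite dual_op_lin.
Qed.

Lemma dual_range_functional (g : Gam F) : inj_on_Gc A' ->
  exists2 nu, linear_on dual_range nu &
    forall psi, fin_supp psi -> nu (A' psi) = pairing psi g.
Proof.
move=> A'_inj.
pose nu phi := if pselect (dual_range phi) is left h then pairing (s2val (cid2 h)) g else 0.
have nuE psi : fin_supp psi -> nu (A' psi) = pairing psi g.
  move=> psi_fs; rewrite /nu; case: pselect => [h|[]]; last by exists psi.
  by case: cid2 => psi' psi'_fs /= /(A'_inj _ _ psi_fs psi'_fs) ->.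
exists nu => // a _ _ [phi phi_fs ->] [psi psi_fs ->].
rewrite -dual_op_lin // !nuE //; first exact: pairing_linear.
exact: fin_supp_lin.
Qed.

Lemma dual_op_inj_surj : inj_on_Gc A' -> surj_op A.
Proof.
move=> A'_inj g; have [nu nu_lin nuE] := dual_range_functional g A'_inj.
have [mu mu_nu mu_lin] :=
  countable_extension (@dual_basis _ _ F) dual_range0 dual_range_lin nu_lin.
have [f mu_f] : exists f : Gam F, forall phi, fin_supp phi -> mu phi = pairing phi f.
  apply: linear_functional_pairing => a phi psi phi_fs psi_fs.
  by apply: mu_lin; apply: (fin_supp_spanned dual_range0 dual_range_lin).
exists f; apply: eq_pairing_sec => psi psi_fs.
rewrite -A'_pairing // -mu_f; last exact: A'_fin_supp.
by rewrite mu_nu ?nuE //; exists psi.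
Qed.

End DualOperator.

Theorem theorem2p1 (R : realType) (X : countType) (x0 : X)
    (F : X -> vectType R[i]) (A : Gam F -> Gam F) (A' : DualSec F -> DualSec F) :
  lin_op A -> cont_op A -> dual_op A A' ->
  (surj_op A <-> inj_on_Gc A').
Proof.
move=> _ _ A'_dual.
by split; [apply: surj_dual_op_inj | apply: dual_op_inj_surj].
Qed.
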